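(* Let $d \geq 1$ and $j \geq 0$. The space $w_{1^j2}(\mathbb{C}^d)$ is homotopy equivalent to $w_{1^j}(\mathbb{C}^d - pt)$, the configuration space of $j$ unordered distinct points in $\mathbb{C}^d$ with one point removed.
   Context: For a space $X$, $Sym^k(X)$ denotes the quotient of $X^k$ by the permutation action of the symmetric group on $k$ letters. A point of $Sym^k(X)$ determines a partition of $k$ by recording multiplicities of the points appearing in it. For a partition $\lambda$ of $k$, $w_\lambda(X)$ is the subspace of $Sym^k(X)$ of points with associated partition $\lambda$. Here $1^j2$ denotes the partition $1+\cdots+1+2$ of $j+2$ with $j$ ones, and $1^j$ the partition of $j$ into $j$ ones. *)

From HB Require Import structures.
From mathcomp Require Import all_boot all_order all_algebra.
From mathcomp Require Import all_classical all_reals.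
From mathcomp Require Import topology normedtype.

Set Implicit Arguments.
Unset Strict Implicit.
Unset Printing Implicit Defensive.

Import Order.TTheory GRing.Theory Num.Theory.
Import numFieldNormedType.Exports.
Local Open Scope classical_set_scope.
Local Open Scope ring_scope.

(* A point of Sym^k(X) = X^k / S_k is recorded by its multiplicity      *)
(* function X -> nat (the S_k-orbit of u : X^k is determined by it).    *)

Definition power (X : topologicalType) (k : nat) := {ptws 'I_k -> X}.

Definition mult (X : topologicalType) (k : nat) (u : 'I_k -> X) : X -> nat :=
  fun x => #|[pred i : 'I_k | u i == x]|%N.

(* The carrier of Sym^k(X): multiplicity functions (only those in the
   range of [mult] are points of Sym^k(X), see [Sym] below). *)
Definition symprod (X : topologicalType) (k : nat) : Type := X -> nat.

HB.instance Definition _ (X : topologicalType) (k : nat) :=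
  gen_eqMixin (symprod X k).
HB.instance Definition _ (X : topologicalType) (k : nat) :=
  gen_choiceMixin (symprod X k).

Section symprod_topology.
Context (X : topologicalType) (k : nat).

Let pi : power X k -> symprod X k := @mult X k.

Definition sym_open (U : set (symprod X k)) := open (pi @^-1` U).

Let sym_openT : sym_open setT.
Proof. by rewrite /sym_open preimage_setT; exact: openT. Qed.

Let sym_openI : setI_closed sym_open.
Proof. by move=> A B oA oB; rewrite /sym_open preimage_setI; exact: openI. Qed.

Let sym_open_bigU (I : Type) (f : I -> set (symprod X k)) :
  (forall i, sym_open (f i)) -> sym_open (\bigcup_i f i).
Proof.
move=> of_; rewrite /sym_open preimage_bigcup.
by apply: bigcup_open => i _; exact: of_.
Qed.

HB.instance Definition _ :=
  isOpenTopological.Build (symprod X k) sym_openT sym_openI sym_open_bigU.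

End symprod_topology.

Definition Sym (X : topologicalType) (k : nat) : set (symprod X k) :=
  range (@mult X k).
Arguments Sym : clear implicits.

(* w_lambda(X): points of Sym^k(X) whose associated partition is lambda,
   i.e. the nonzero multiplicities, listed over a duplicate-free
   enumeration of the support, form (up to order) the list lambda. *)
Definition w (X : topologicalType) (k : nat) (lam : seq nat)
  : set (symprod X k) :=
  [set m | Sym X k m /\
     exists s : seq X, [/\ uniq s, (forall x, (m x != 0)%N -> x \in s)
                         & perm_eq [seq m x | x <- s] lam]].
Arguments w : clear implicits.

Definition part_1j2 (j : nat) : seq nat := rcons (nseq j 1%N) 2%N.
Definition part_1j (j : nat) : seq nat := nseq j 1%N.

Definition homotopic_on (R : realType) (T U : topologicalType)
  (A : set T) (B : set U) (f g : T -> U) :=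
  exists H : (R * T)%type -> U,
    [/\ {within (`[0, 1] `*` A), continuous H},
        H @` (`[0, 1] `*` A) `<=` B,
        (forall x, A x -> H (0, x) = f x) &
        (forall x, A x -> H (1, x) = g x)].
Arguments homotopic_on : clear implicits.

Definition homotopy_equivalent (R : realType) (T U : topologicalType)
  (A : set T) (B : set U) :=
  exists (f : T -> U) (g : U -> T),
    [/\ {within A, continuous f}, f @` A `<=` B,
        {within B, continuous g} & g @` B `<=` A] /\
    homotopic_on R T T A A (g \o f) id /\
    homotopic_on R U U B B (f \o g) id.

(* C^d, as a topological space, is R^(2d). *)
Definition Cd (R : realType) (d : nat) := 'rV[R]_(2 * d).

From HB Require Import structures.
From mathcomp Require Import all_boot all_order all_algebra.
From mathcomp Require Import all_classical all_reals.
From mathcomp Require Import topology normedtype.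
From mathcomp Require Import fingroup perm.

Set Implicit Arguments.
Unset Strict Implicit.
Unset Printing Implicit Defensive.

Import Order.TTheory GRing.Theory Num.Theory.
Import numFieldNormedType.Exports.
Local Open Scope classical_set_scope.
Local Open Scope ring_scope.

(* Let c be the double point of a configuration in w_{1^j 2}(V), V a normed
   space. Translating the configuration by p - c moves the double point to p,
   and dropping it leaves j distinct points of V - p; conversely, adding p
   twice to such a configuration gives a point of w_{1^j 2}(V). The composite
   on w_{1^j 2}(V) is the translation by p - c, joined to the identity by the
   translations by (1 - t)(p - c); the other composite is the identity.
   Continuity is checked on tuples, since the quotient map
   V^k -> Sym^k(V) is open, its fibres being S_k-orbits. *)

Lemma cvg_ptws (I T : Type) (X : topologicalType) (F : set_system T)
  (g : T -> {ptws I -> X}) (f : {ptws I -> X}) :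
  Filter F -> (forall i, (fun t => g t i) @ F --> f i) -> g @ F --> f.
Proof.
move=> FF gf; apply/cvg_sup => i U [_ /= [[W oW <-]] Wfi] /filterS; apply.
by apply: (gf i); exact: open_nbhs_nbhs.
Qed.

Lemma near_neq (T Y : topologicalType) (f g : T -> Y) (x : T) :
  hausdorff_space Y -> {for x, continuous f} -> {for x, continuous g} ->
  f x != g x -> \forall t \near x, f t != g t.
Proof.
rewrite open_hausdorff => sepY cf cg /sepY [[U V] /= [Ufx Vgx] [oU oV /eqP UV]].
have nU : \forall t \near x, U (f t).
  by apply: cf; apply: open_nbhs_nbhs; split => //; exact: set_mem.
have nV : \forall t \near x, V (g t).
  by apply: cg; apply: open_nbhs_nbhs; split => //; exact: set_mem.
apply: filterS2 nU nV => t Uft Vgt; apply/eqP => e.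
have : (U `&` V) (f t) by split; rewrite // e.
by rewrite UV.
Qed.

Lemma perm_pair (T : finType) (x0 x1 a b : T) :
  x0 != x1 -> a != b -> exists s : {perm T}, s x0 = a /\ s x1 = b.
Proof.
move=> x01 ab; pose t1 := tperm x0 a; pose t2 := tperm x1 (t1 b).
have t1b : t1 b != x0.
  by apply: contra ab => /eqP e; apply/eqP/(@perm_inj _ t1); rewrite e tpermR.
exists (t2 * t1)%g; split; last by rewrite permM tpermL tpermK.
by rewrite permM [t2 _]tpermD ?tpermL // eq_sym.
Qed.

Lemma card_count (T : finType) (P : pred T) :
  #|[pred i | P i]| = count P (enum T).
Proof.
rewrite -size_filter cardE /enum_mem -enumT /= -filter_predI; congr size.
by apply: eq_filter => x /=; rewrite !inE andbT.
Qed.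

(* Typeclass resolution does not unfold [power]. *)
#[local] Instance power_nbhs_filter (X : topologicalType) k (u : power X k) :
  Filter (nbhs u) := @nbhs_filter (power X k) u.

Section MultTopology.
Context (X : topologicalType) (k : nat).

Lemma mult_count (u : 'I_k -> X) x :
  mult u x = count_mem x [seq u i | i <- enum 'I_k].
Proof. by rewrite count_map -(@card_count _ (fun i => u i == x)). Qed.

Lemma mult_comp_perm (s : {perm 'I_k}) (u : 'I_k -> X) : mult (u \o s) = mult u.
Proof.
apply: funext => x; rewrite !mult_count.
have pe : perm_eq [seq s i | i <- enum 'I_k] (enum 'I_k).
  apply: uniq_perm; [by rewrite map_inj_uniq ?enum_uniq //; exact: perm_inj|
    exact: enum_uniq|].
  move=> i; rewrite mem_enum; apply/mapP; exists (s^-1 i)%g.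
    by rewrite mem_enum.
  by rewrite permKV.
by have := perm_map u pe; rewrite -map_comp => /seq.permP; exact.
Qed.

Lemma mult_eq_perm (u v : 'I_k -> X) :
  mult u = mult v -> exists s : {perm 'I_k}, v = u \o s.
Proof.
move=> e.
have pe : perm_eq [tuple v i | i < k] [tuple u i | i < k].
  by apply/allP => x _; apply/eqP; rewrite /= -!mult_count e.
have [s hs] := tuple_permP pe; exists s; apply: funext => i /=.
have := congr1 (fun t : k.-tuple X => tnth t i) (val_inj hs).
by rewrite /= !tnth_mktuple.
Qed.

Lemma continuous_comp_perm (s : {perm 'I_k}) :
  continuous ((fun v => v \o s) : power X k -> power X k).
Proof.
move=> v; apply: (@cvg_ptws _ _ _ (nbhs (v : power X k))) => t.
exact: (@proj_continuous _ (fun=> X) (s t) v).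
Qed.

Lemma mult_continuous : continuous (@mult X k : power X k -> symprod X k).
Proof. by apply/continuousP. Qed.

(* The quotient map is open: the saturation of an open set is a finite
   union of its images under the permutations of coordinates. *)
Lemma mult_open (O : set (power X k)) :
  open O -> @open (symprod X k) (@mult X k @` O).
Proof.
move=> oO.
suff : open ((@mult X k : power X k -> symprod X k) @^-1` (@mult X k @` O)) by [].
have -> : (@mult X k : power X k -> symprod X k) @^-1` (@mult X k @` O) =
    \bigcup_(s in [set: {perm 'I_k}]) ((fun v : power X k => v \o s) @^-1` O).
  apply/seteqP; split => v /=.
  - by case=> u Ou /esym/mult_eq_perm [s esu]; exists s; rewrite //= -esu.
  - by case=> s _ Os; exists (v \o s) => //; exact: mult_comp_perm.
apply: bigcup_open => s _.
by move/continuousP: (continuous_comp_perm (s := s)); apply.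
Qed.

Lemma near_mult (P : set (power X k)) (u0 : power X k) :
  (\forall u \near u0, P u) ->
  \forall m \near (@mult X k u0 : symprod X k), exists2 u, mult u = m & P u.
Proof.
move=> nP; have : nbhs u0 P by [].
rewrite nbhsE => -[O [oO Ou0] OP].
apply: (@filterS _ _ _ (@mult X k @` O)).
  by move=> m [u Ou <-]; exists u => //; exact: OP.
by apply: open_nbhs_nbhs; split; [exact: mult_open | exists u0].
Qed.

Lemma near_mult_pair (Y : topologicalType) (P : set (Y * power X k))
    (y0 : Y) (u0 : power X k) :
  (\forall q \near ((y0, u0) : Y * power X k), P q) ->
  \forall r \near ((y0, @mult X k u0) : Y * symprod X k),
    exists2 u, mult u = r.2 & P (r.1, u).
Proof.
case=> [[A B]] /= [nA nB] AB.
exists (A, [set m | exists2 u, mult u = m & B u]); first by split; [|exact: near_mult].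
by case=> y m /= [Ay [u e Bu]]; exists u => //; exact: (AB (y, u)).
Qed.

End MultTopology.

Section Fibres.
Context (Y : topologicalType) (n : nat).
Implicit Types (u : 'I_n -> Y) (y : Y).

Lemma mult_neq0 u y : (mult u y != 0)%N -> exists i, u i = y.
Proof. by rewrite -lt0n => /card_gt0P [i]; rewrite inE => /eqP; exists i. Qed.

Lemma leq_size_mult u (s : seq 'I_n) y :
  uniq s -> (forall i, i \in s -> u i = y) -> (size s <= mult u y)%N.
Proof.
move=> us sy; rewrite -(card_uniqP us); apply: subset_leq_card.
by apply/fintype.subsetP => i /sy ui; rewrite inE ui.
Qed.

Lemma mult_gt1 u y :
  (1 < mult u y)%N -> exists a b, [/\ a != b, u a = y & u b = y].
Proof.
move=> m2; have [a ua] : exists a, u a = y.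
  by apply: mult_neq0; rewrite -lt0n; exact: ltnW.
move: m2; rewrite /mult (cardD1 a) inE ua eqxx add1n ltnS => /card_gt0P [b].
by rewrite !inE => /andP[ba /eqP ub]; exists a, b; rewrite eq_sym.
Qed.

Lemma mult_eq1 u i : (forall i', u i' = u i -> i' = i) -> mult u (u i) = 1%N.
Proof.
move=> ui; rewrite /mult (eq_card (B := pred1 i)) ?card1 // => i'.
by rewrite !inE; apply/eqP/eqP => [/ui|->].
Qed.

Lemma w1j_mult_inj u : injective u -> w Y n (part_1j n) (mult u).
Proof.
move=> iu; split; first by exists u.
exists [seq u i | i <- enum 'I_n]; split.
- by rewrite map_inj_uniq ?enum_uniq.
- by move=> x /mult_neq0 [i <-]; apply: map_f; rewrite mem_enum.
rewrite -map_comp (@eq_map _ _ _ (fun=> 1%N)) => [|i /=]; last first.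
  by apply: mult_eq1 => i' /iu.
have /all_pred1P -> : all (pred1 1%N) [seq 1%N | _ <- enum 'I_n].
  by apply/allP => _ /mapP[? _ ->].
by rewrite size_map size_enum_ord.
Qed.

Lemma w1j_le1 m : w Y n (part_1j n) m -> forall y, (m y <= 1)%N.
Proof.
case=> _ [s [_ sup pe]] y; have [->//|nz] := eqVneq (m y) 0%N.
have : m y \in nseq n 1%N by rewrite -(perm_mem pe) map_f ?sup.
by rewrite mem_nseq => /andP[_ /eqP ->].
Qed.

Lemma w1j_mult_injective u : w Y n (part_1j n) (mult u) -> injective u.
Proof.
move=> wu a a' uaa'; apply/eqP/negPn/negP => ne.
have : (2 <= mult u (u a))%N.
  apply: (@leq_size_mult u [:: a; a']); first by rewrite /= inE ne.
  by move=> i; rewrite !inE => /orP[] /eqP ->.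
by rewrite leqNgt ltnS w1j_le1.
Qed.

End Fibres.

Lemma mult_split (Y : topologicalType) n m (u : 'I_(n + m) -> Y) y :
  mult u y = (#|[pred a : 'I_n | u (lshift m a) == y]| +
              #|[pred b : 'I_m | u (rshift n b) == y]|)%N.
Proof. by rewrite /mult -!sum1_card big_split_ord. Qed.

Section DoubledTuples.
Context (Y : topologicalType) (j : nat).
Local Notation A := (w Y (j + 2) (part_1j2 j)).
Implicit Types (u : 'I_(j + 2) -> Y) (m : symprod Y (j + 2)).

Definition dbl0 : 'I_(j + 2) := rshift j ord0.
Definition dbl1 : 'I_(j + 2) := rshift j ord_max.
Definition dbl_pos : seq 'I_(j + 2) := [:: dbl0; dbl1].

(* The tuples lying over w_{1^j 2}(Y), normalised so that the double point
   sits at the last two coordinates. *)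
Definition doubled (u : 'I_(j + 2) -> Y) :=
  u dbl0 = u dbl1 /\
  forall i i', i != i' -> u i = u i' -> (i \in dbl_pos) && (i' \in dbl_pos).

Lemma dbl0_neq1 : dbl0 != dbl1.
Proof. by rewrite -val_eqE /= eqn_add2l. Qed.

Lemma lshift_dbl_pos (a : 'I_j) : lshift 2 a \notin dbl_pos.
Proof. by rewrite !inE -!val_eqE /= !ltn_eqF // ltn_addr. Qed.

Lemma rshift_dbl_pos (b : 'I_2) : rshift j b \in dbl_pos.
Proof. by case: b => -[|[|//]] ?; rewrite !inE -!val_eqE /= eqxx ?orbT. Qed.

Lemma dbl_posN (i : 'I_(j + 2)) : i \notin dbl_pos -> exists a, i = lshift 2 a.
Proof.
case: (splitP i) => [a ia|b ib]; first by exists a; apply: val_inj.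
have -> : i = rshift j b by exact: val_inj.
by rewrite rshift_dbl_pos.
Qed.

Lemma doubled_dbl_pos u i : doubled u -> i \in dbl_pos -> u i = u dbl0.
Proof. by case=> e _; rewrite !inE => /orP[] /eqP ->. Qed.

Lemma mult_doubled u : doubled u -> mult u (u dbl0) = 2%N.
Proof.
case=> e uinj; rewrite /mult (eq_card (B := mem dbl_pos)).
  by apply/card_uniqP; rewrite /= inE dbl0_neq1.
move=> i; rewrite !inE; apply/eqP/idP => [ei|/orP[] /eqP -> //].
have [->//|ne] := eqVneq i dbl0.
by have /andP[+ _] := uinj _ _ ne ei; rewrite !inE (negbTE ne).
Qed.

Lemma w1j2_mult_doubled u : doubled u -> A (mult u).
Proof.
move=> du; have [e uinj] := du; split; first by exists u.
have lshift_inj (a : 'I_j) i : i != lshift 2 a -> u i = u (lshift 2 a) -> False.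
  by move=> ne /(uinj _ _ ne); rewrite (negbTE (lshift_dbl_pos a)) andbF.
exists (rcons [seq u (lshift 2 a) | a <- enum 'I_j] (u dbl0)); split.
- rewrite rcons_uniq; apply/andP; split.
    apply/mapP => -[a _ ea]; apply: (lshift_inj a dbl0) => //.
    by apply: contra (lshift_dbl_pos a) => /eqP <-; rewrite !inE eqxx.
  rewrite map_inj_uniq ?enum_uniq // => a a' ea; apply/eqP/negPn/negP => ne.
  exact: (lshift_inj a' (lshift 2 a)).
- move=> x /mult_neq0 [i <-]; rewrite mem_rcons inE.
  have [iD|/dbl_posN [a ->]] := boolP (i \in dbl_pos).
    by rewrite (doubled_dbl_pos du iD) eqxx.
  by rewrite map_f ?orbT ?mem_enum.
rewrite map_rcons -map_comp mult_doubled // /part_1j2.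
rewrite (@eq_map _ _ _ (fun=> 1%N)) => [|a /=]; last first.
  by apply: mult_eq1 => i ei; apply/eqP/negPn/negP => ne; exact: (lshift_inj a i).
have /all_pred1P -> : all (pred1 1%N) [seq 1%N | _ <- enum 'I_j].
  by apply/allP => _ /mapP[? _ ->].
by rewrite size_map size_enum_ord.
Qed.

Lemma w1j2_le2 m : A m -> forall y, (m y <= 2)%N.
Proof.
case=> _ [s [_ sup pe]] y; have [->//|nz] := eqVneq (m y) 0%N.
have : m y \in part_1j2 j by rewrite -(perm_mem pe) map_f ?sup.
by rewrite mem_rcons inE mem_nseq => /orP[/eqP->|/andP[_ /eqP->]].
Qed.

Lemma w1j2_ex2 m : A m -> exists y, m y = 2%N.
Proof.
case=> _ [s [_ _ pe]].
have : 2%N \in [seq m y | y <- s] by rewrite (perm_mem pe) mem_rcons inE eqxx.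
by case/mapP => y _ ->; exists y.
Qed.

Lemma w1j2_uniq2 m : A m -> forall x y, m x = 2%N -> m y = 2%N -> x = y.
Proof.
case=> _ [s [us sup pe]] x y mx my; apply/eqP/negPn/negP => ne.
have c1 : count (fun z => m z == 2%N) s = 1%N.
  have := seq.permP pe (pred1 2%N); rewrite count_map => ->.
  by rewrite /part_1j2 -cats1 count_cat count_nseq /= mul0n.
have : (size [:: x; y] <= count (fun z => m z == 2%N) s)%N.
  rewrite -size_filter; apply: uniq_leq_size; first by rewrite /= inE ne.
  move=> z; rewrite !inE mem_filter => /orP[] /eqP ->.
    by rewrite mx eqxx sup // mx.
  by rewrite my eqxx sup // my.
by rewrite c1.
Qed.

Lemma w1j2_mult_eq2 u a b : A (mult u) -> a != b -> u b = u a ->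
  mult u (u a) = 2%N.
Proof.
move=> Au ab ba; apply/eqP; rewrite eqn_leq w1j2_le2 //=.
apply: (@leq_size_mult _ _ u [:: a; b]); first by rewrite /= inE ab.
by move=> z; rewrite !inE => /orP[] /eqP ->.
Qed.

Lemma doubledP u : A (mult u) -> u dbl0 = u dbl1 -> doubled u.
Proof.
move=> Au e; split=> // i i' ne ei.
have ui0 : u i = u dbl0.
  apply: (w1j2_uniq2 Au); first exact: w1j2_mult_eq2 Au ne (esym ei).
  exact: w1j2_mult_eq2 Au dbl0_neq1 (esym e).
have inD z : u z = u dbl0 -> z \in dbl_pos.
  move=> uz; apply/negPn/negP => zD.
  have : (3 <= mult u (u dbl0))%N.
    apply: (@leq_size_mult _ _ u [:: dbl0; dbl1; z]).
      move: zD; rewrite /= !inE !negb_or => /andP[z0 z1].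
      by rewrite dbl0_neq1 ![_ == z]eq_sym z0 z1.
    by move=> q; rewrite !inE => /orP[/eqP->|/orP[]/eqP->].
  by rewrite (w1j2_mult_eq2 Au dbl0_neq1 (esym e)).
by rewrite !inD // -ei.
Qed.

Lemma w1j2_lift m : A m -> exists2 u, doubled u & mult u = m.
Proof.
move=> Am; have [[v _ ev] _] := Am; have [x m2] := w1j2_ex2 Am.
have [a [b [ab va vb]]] : exists a b, [/\ a != b, v a = x & v b = x].
  by apply: mult_gt1; rewrite ev m2.
have [s [s0 s1]] := perm_pair dbl0_neq1 ab.
exists (v \o s); last by rewrite mult_comp_perm.
by apply: doubledP; rewrite ?mult_comp_perm ?ev //= s0 s1 va vb.
Qed.

End DoubledTuples.
Arguments dbl0 {j}.
Arguments dbl1 {j}.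
Arguments dbl_pos {j}.
Arguments rshift_dbl_pos {j}.

Section DoubledTopology.
Context (Y : topologicalType) (j : nat) (sepY : hausdorff_space Y).
Local Notation A := (w Y (j + 2) (part_1j2 j)).
Local Notation power2 := (power Y (j + 2)).

Lemma near_doubled (u0 : power2) :
  doubled u0 -> \forall v \near u0, A (mult v) -> doubled v.
Proof.
case=> _ u0inj.
have sep : \forall v \near u0, forall i i',
    [|| (i \in dbl_pos) && (i' \in dbl_pos), i == i' | v i != v i'].
  apply: (@filter_forall _ _ _ (nbhs u0)) => i.
  apply: (@filter_forall _ _ _ (nbhs u0)) => i'.
  have [_|nD] := boolP ((i \in dbl_pos) && (i' \in dbl_pos)); first exact: nearW.
  have [_|ne] := eqVneq i i'; first by apply: nearW => v; rewrite orbT.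
  have : u0 i != u0 i' by apply: contraNneq nD; exact: u0inj.
  move/(near_neq sepY (@proj_continuous _ (fun=> Y) i u0)
                      (@proj_continuous _ (fun=> Y) i' u0)).
  by apply: filterS => v ->; rewrite !orbT.
apply: filterS sep => v sepv Av; apply: doubledP => //.
have vinj i i' : i != i' -> v i = v i' -> (i \in dbl_pos) && (i' \in dbl_pos).
  by move=> ne ei; move: (sepv i i'); rewrite (negbTE ne) ei eqxx !orbF.
have [x m2] := w1j2_ex2 Av.
have [a [b [ab va vb]]] : exists a b, [/\ a != b, v a = x & v b = x].
  by apply: mult_gt1; rewrite m2.
have /andP[aD bD] := vinj a b ab (etrans va (esym vb)).
move: aD bD ab va vb; rewrite !inE => /orP[]/eqP-> /orP[]/eqP->;
  by rewrite ?eqxx // => _ -> ->.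
Qed.

Lemma within_w1j2_continuous (Z : topologicalType) (k : nat)
    (F : symprod Y (j + 2) -> symprod Z k) (G : power2 -> power Z k) :
  (forall v, doubled v -> F (mult v) = mult (G v)) ->
  (forall u, doubled u -> {for u, continuous G}) ->
  {within A, continuous F}.
Proof.
move=> FG cG; apply/subspace_continuousP => _ /w1j2_lift [u0 du0 <-] W nW.
have nGW : \forall v \near (u0 : power2), W (mult (G v)).
  apply: (continuous_comp (cG _ du0) (@mult_continuous Z k (G u0))).
  by rewrite /= -FG.
have : \forall v \near (u0 : power2), A (mult v) -> W (F (mult v)).
  by apply: filterS2 nGW (near_doubled du0) => v Wv dv /dv dv'; rewrite FG.
by move/near_mult; apply: filterS => _ [v <- Pv].
Qed.

Lemma within_w1j2_continuous_param (T Z : topologicalType) (k : nat) (S : set T)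
    (F : T * symprod Y (j + 2) -> symprod Z k) (G : T * power2 -> power Z k) :
  (forall t v, doubled v -> F (t, mult v) = mult (G (t, v))) ->
  (forall t u, doubled u -> {for (t, u), continuous G}) ->
  {within S `*` A, continuous F}.
Proof.
move=> FG cG; apply/subspace_continuousP => -[t0 m] [_ /= /w1j2_lift [u0 du0 <-]].
move=> W nW.
have nGW : \forall q \near ((t0, u0) : T * power2), W (mult (G q)).
  apply: (continuous_comp (cG _ _ du0) (@mult_continuous Z k (G (t0, u0)))).
  by rewrite /= -FG.
have ndbl : \forall q \near ((t0, u0) : T * power2), A (mult q.2) -> doubled q.2.
  by exists (setT, [set v | A (mult v) -> doubled v]) => [|[t v] [_]] //=;
    split; [exact: filterT | exact: near_doubled].
have : \forall q \near ((t0, u0) : T * power2), A (mult q.2) -> W (F (q.1, mult q.2)).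
  apply: filterS2 nGW ndbl => -[t v] /= Wv dv /dv dv'.
  by rewrite FG.
by move/near_mult_pair; apply: filterS => -[t _] /= [v <- Pv] [_].
Qed.

End DoubledTopology.

Section Translation.
Context (R : realType) (V : normedModType R) (j : nat) (p : V)
  (q0 : set_type [set~ p]).
Local Notation Vp := (set_type [set~ p]).
Local Notation A := (w V (j + 2) (part_1j2 j)).
Local Notation B := (w Vp j (part_1j j)).
Local Notation power2 := (power V (j + 2)).

(* [q0] is a junk value, taken at [p]. *)
Definition to_punct (x : V) : Vp := insubd q0 x.

Lemma to_punctK x : x != p -> val (to_punct x) = x.
Proof.
by move=> xp; rewrite insubdK //; apply/mem_set => /eqP; rewrite (negbTE xp).
Qed.

Lemma punct_neq (z : Vp) : val z != p.
Proof. by case: z => /= x /set_mem /= /eqP. Qed.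

Lemma val_to_punct (z : Vp) : to_punct (val z) = z.
Proof. by apply: val_inj; rewrite to_punctK ?punct_neq. Qed.

Lemma to_punct_continuous x : x != p -> {for x, continuous to_punct}.
Proof.
move=> xp U [_ /= [[W oW <-] Wx] WU].
have nW : nbhs x W.
  by apply: open_nbhs_nbhs; split; rewrite //= -(to_punctK xp).
have nxp : \forall y \near x, y != p.
  exact: near_neq (@norm_hausdorff R V) (@cvg_id _ (nbhs x)) (cvg_cst p) xp.
by apply: filterS2 nW nxp => y Wy yp; apply: WU; rewrite /= set_valE to_punctK.
Qed.

(* [p] is a junk value, taken outside [A]. *)
Definition dbl_point (m : symprod V (j + 2)) : V := xget p [set x | m x = 2%N].

Lemma dbl_point_eq2 m : A m -> m (dbl_point m) = 2%N.
Proof. by move=> Am; apply: (@xgetPex _ p [set x | m x = 2%N]); exact: w1j2_ex2. Qed.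

Lemma dbl_point_mult (u : power2) : doubled u -> dbl_point (mult u) = u dbl0.
Proof.
move=> du; have Au := w1j2_mult_doubled du.
by apply: (w1j2_uniq2 Au); [exact: dbl_point_eq2 | exact: mult_doubled].
Qed.

(* Multiplicity functions are moved by precomposition: this translates m by
   p - c and forgets the point p. *)
Definition drop_double (m : symprod V (j + 2)) : symprod Vp j :=
  fun z => m (val z + dbl_point m - p).

Definition add_double (n : symprod Vp j) : symprod V (j + 2) :=
  fun x => if x == p then 2%N else n (to_punct x).

Definition slide_double (tm : R * symprod V (j + 2)) : symprod V (j + 2) :=
  fun x => tm.2 (x + (1 - tm.1) *: (dbl_point tm.2 - p)).

Definition append_pp (u : power Vp j) : power2 :=
  fun i => if fintype.split i is inl a then val (u a) else p.

Definition drop_double_tuple (v : power2) : power Vp j :=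
  fun a => to_punct (v (lshift 2 a) - v dbl0 + p).

Definition slide_tuple (tv : R * power2) : power2 :=
  fun i => tv.2 i - (1 - tv.1) *: (tv.2 dbl0 - p).

Lemma append_pp_lshift u a : append_pp u (lshift 2 a) = val (u a).
Proof. by rewrite /append_pp -[lshift 2 a]/(unsplit (inl a)) unsplitK. Qed.

Lemma append_pp_rshift u b : append_pp u (rshift j b) = p.
Proof. by rewrite /append_pp -[rshift j b]/(unsplit (inr b)) unsplitK. Qed.

Lemma add_double_mult u : add_double (mult u) = mult (append_pp u).
Proof.
apply: funext => x; rewrite /add_double mult_split.
have [->|xp] := eqVneq x p.
  rewrite eq_card0 => [|a]; last by rewrite !inE append_pp_lshift (negbTE (punct_neq _)).
  by rewrite (eq_card (B := predT)) ?card_ord // => b; rewrite !inE append_pp_rshift eqxx.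
rewrite [X in (_ + X)%N]eq_card0 ?addn0 => [|b]; last first.
  by rewrite !inE append_pp_rshift eq_sym (negbTE xp).
apply: eq_card => a; rewrite !inE append_pp_lshift.
by rewrite -[in RHS](to_punctK xp) val_eqE.
Qed.

Lemma drop_double_neq (v : power2) a : doubled v -> v (lshift 2 a) - v dbl0 + p != p.
Proof.
case=> _ vinj; rewrite -subr_eq0 addrK subr_eq0; apply: contraTneq isT => e.
have ne : lshift 2 a != dbl0.
  by apply: contraNneq (lshift_dbl_pos a) => ->; rewrite !inE eqxx.
by have := vinj _ _ ne e; rewrite (negbTE (lshift_dbl_pos a)).
Qed.

Lemma drop_double_mult (v : power2) :
  doubled v -> drop_double (mult v) = mult (drop_double_tuple v).
Proof.
move=> dv; apply: funext => z; rewrite /drop_double dbl_point_mult // mult_split.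
rewrite [X in (_ + X)%N]eq_card0 ?addn0 => [|b]; last first.
  rewrite !inE (doubled_dbl_pos dv (rshift_dbl_pos b)) eq_sym addrAC.
  by rewrite -[X in _ == X]add0r (inj_eq (addIr _)) subr_eq0 (negbTE (punct_neq z)).
apply: eq_card => a; rewrite !inE -(inj_eq val_inj) to_punctK ?drop_double_neq //.
by apply/eqP/eqP => [->|<-]; rewrite addrAC ?subrK ?addrK ?subrK.
Qed.

Lemma slide_mult t (v : power2) : doubled v ->
  slide_double (t, mult v) = mult (slide_tuple (t, v)).
Proof.
move=> dv; apply: funext => x; rewrite /slide_double /= dbl_point_mult //.
by apply: eq_card => i; rewrite !inE subr_eq.
Qed.

Lemma append_pp_continuous : continuous append_pp.
Proof.
move=> u; apply: (@cvg_ptws _ _ _ (nbhs u)) => i.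
rewrite /append_pp; case: (fintype.split i) => [a|_]; last exact: cvg_cst.
exact: (continuous_comp (@proj_continuous _ (fun=> Vp) a u)
  (@initial_continuous _ _ (@set_val _ [set~ p]) (u a))).
Qed.

Lemma add_double_continuous : continuous add_double.
Proof.
apply/continuousP => U oU.
suff : open ((@mult Vp j : power Vp j -> _) @^-1` (add_double @^-1` U)) by [].
rewrite (_ : _ @^-1` _ = append_pp @^-1` ((@mult V (j + 2) : power2 -> _) @^-1` U)).
  by move/continuousP: append_pp_continuous; apply; exact: oU.
by apply/seteqP; split => u /=; rewrite add_double_mult.
Qed.

Lemma drop_double_tuple_continuous (v : power2) :
  doubled v -> {for v, continuous drop_double_tuple}.
Proof.
move=> dv; apply: (@cvg_ptws _ _ _ (nbhs v)) => a.
apply: (@continuous_comp _ _ _ (fun v : power2 => v (lshift 2 a) - v dbl0 + p));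
  last exact: to_punct_continuous (drop_double_neq a dv).
apply: cvgD; last exact: cvg_cst.
by apply: cvgB; exact: (@proj_continuous _ (fun=> V)).
Qed.

Lemma slide_tuple_continuous : continuous slide_tuple.
Proof.
move=> tv; apply: (@cvg_ptws _ _ _ (nbhs tv)) => i.
have proj2 k : (fun q : R * power2 => q.2 k) @ tv --> tv.2 k.
  exact: continuous_comp cvg_snd (@proj_continuous _ (fun=> V) k tv.2).
apply: cvgB; first exact: proj2.
apply: cvgZ; first by apply: cvgB; [exact: cvg_cst | exact: cvg_fst].
by apply: cvgB; [exact: proj2 | exact: cvg_cst].
Qed.

Lemma drop_double_continuous : {within A, continuous drop_double}.
Proof.
apply: (within_w1j2_continuous (@norm_hausdorff R V) drop_double_mult).
exact: drop_double_tuple_continuous.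
Qed.

Lemma slide_double_continuous (S : set R) :
  {within S `*` A, continuous slide_double}.
Proof.
apply: (within_w1j2_continuous_param (@norm_hausdorff R V) slide_mult).
by move=> t u _; exact: slide_tuple_continuous.
Qed.

Lemma drop_double_w : drop_double @` A `<=` B.
Proof.
move=> _ [_ /w1j2_lift [v dv <-] <-]; rewrite drop_double_mult //.
apply: w1j_mult_inj => a a' /(congr1 val).
rewrite !to_punctK ?drop_double_neq // => /addIr /addIr vaa'.
apply/eqP/negPn/negP => ne; case: dv => _ /(_ _ _ _ vaa').
by rewrite (inj_eq (@lshift_inj _ _)) ne (negbTE (lshift_dbl_pos a)) => /(_ isT).
Qed.

Lemma append_pp_doubled (u : power Vp j) : injective u -> doubled (append_pp u).
Proof.
move=> uinj; split=> [|i i']; first by rewrite !append_pp_rshift.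
have appD k : k \in dbl_pos -> append_pp u k = p.
  by rewrite !inE => /orP[] /eqP ->; rewrite append_pp_rshift.
have [iD|/dbl_posN [a ->]] := boolP (i \in dbl_pos);
  have [i'D|/dbl_posN [a' ->]] := boolP (i' \in dbl_pos).
- by move=> _ _; apply/andP.
- by rewrite (appD i iD) append_pp_lshift => _ /esym/eqP; rewrite (negbTE (punct_neq _)).
- by rewrite (appD i' i'D) append_pp_lshift => _ /eqP; rewrite (negbTE (punct_neq _)).
- by rewrite !append_pp_lshift => + /val_inj/uinj aa'; rewrite aa' eqxx.
Qed.

Lemma add_double_w : add_double @` B `<=` A.
Proof.
move=> _ [n Bn <-]; have [[u _ un] _] := Bn.
rewrite -un add_double_mult; apply/w1j2_mult_doubled/append_pp_doubled.
by apply: w1j_mult_injective; rewrite un.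
Qed.

Lemma doubled_subr (v : power2) c : doubled v -> doubled (fun i => v i - c).
Proof. by case=> e vinj; split=> [|i i' ne /addIr]; [rewrite e | exact: vinj]. Qed.

Lemma slide_double_w (S : set R) : slide_double @` (S `*` A) `<=` A.
Proof.
move=> _ [[t _] [_ /= /w1j2_lift [v dv <-]] <-].
by rewrite slide_mult //; apply/w1j2_mult_doubled/doubled_subr.
Qed.

Lemma slide_double0 m : A m -> slide_double (0, m) = add_double (drop_double m).
Proof.
move=> Am; apply: funext => x; rewrite /slide_double /add_double /drop_double /=.
rewrite subr0 scale1r; have [->|xp] := eqVneq x p.
  by rewrite addrC subrK dbl_point_eq2.
by rewrite to_punctK // addrA.
Qed.

Lemma slide_double1 m : slide_double (1, m) = m.
Proof. by apply: funext => x; rewrite /slide_double /= subrr scale0r addr0. Qed.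

Lemma drop_add_double n : B n -> drop_double (add_double n) = n.
Proof.
move=> Bn; have Aan : A (add_double n) by apply: add_double_w; exists n.
have dpp : dbl_point (add_double n) = p.
  by apply: (w1j2_uniq2 Aan); [exact: dbl_point_eq2 | rewrite /add_double eqxx].
apply: funext => z; rewrite /drop_double dpp addrK /add_double.
by rewrite (negbTE (punct_neq z)) val_to_punct.
Qed.

End Translation.

Lemma homotopic_on_id (R : realType) (T : topologicalType) (A : set T)
    (f : T -> T) :
  (forall x, A x -> f x = x) -> homotopic_on R T T A A f id.
Proof.
move=> fA; exists snd; split => //.
- by apply: continuous_subspaceT => x; exact: cvg_snd.
- by move=> _ [[t x] [_ Ax] <-].
- by move=> x /fA.
Qed.

Lemma Cd_punctured_inhabited (R : realType) (d : nat) (p : Cd R d) :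
  (1 <= d)%N -> inhabited (set_type [set~ p]).
Proof.
move=> d1; have i0 : (0 < 2 * d)%N by rewrite muln_gt0 d1.
have hq : (p + const_mx 1 : Cd R d) \in [set~ p].
  apply/mem_set => /= /(congr1 (fun q : Cd R d => q 0 (Ordinal i0))).
  by rewrite !mxE => /eqP; rewrite -subr_eq0 addrAC subrr add0r oner_eq0.
by constructor; exact: SigSub hq.
Qed.

Theorem mainTheorem3 (R : realType) (d j : nat) (p : Cd R d) :
  (1 <= d)%N ->
  homotopy_equivalent R
    (w (Cd R d) (j + 2) (part_1j2 j))
    (w (set_type [set~ p]) j (part_1j j)).
Proof.
move=> d1; have [q0] := Cd_punctured_inhabited p d1.
exists (drop_double (j := j) (p := p)), (add_double q0); split; last split.
- split; [exact: drop_double_continuous | exact: drop_double_w | |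
          exact: add_double_w].
  by apply: continuous_subspaceT; exact: add_double_continuous.
- exists (slide_double (j := j) p); split; [exact: slide_double_continuous |
    exact: slide_double_w | | by move=> m _; rewrite slide_double1].
  by move=> m Am; rewrite (slide_double0 q0).
- by apply: homotopic_on_id => n; exact: drop_add_double.
Qed.
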